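(* The complex linear span $\mathcal{L}=\{\sum_{l,m=1}^n a^m_l Y^l_m : a^m_l\in\mathbf{C}\}$ is closed under the Lie bracket of vector fields and has dimension $n^2-1$ over $\mathbf{C}$; hence it is an $(n^2-1)$-dimensional Lie algebra.
   Context: Coordinates $x=(x_1,\dots,x_n)\in\mathbf{C}^n$, $n\ge2$, working on the open set $\{u\ne0\}$. Notation: $u=\sum_{j=1}^n x_j$, $D=\sum_{j=1}^n x_j\,\partial/\partial x_j$, and for $l,m\in\{1,\dots,n\}$, $Y^l_m = x_m u^{l-m-1}\big(D-u\,\partial/\partial x_l\big)$. *)

From mathcomp Require Import all_boot all_algebra.
From mathcomp Require Import complex Rstruct.
From mathcomp Require Import mpoly.
Set Implicit Arguments. Unset Strict Implicit. Unset Printing Implicit Defensive.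
Import GRing.Theory.
Local Open Scope ring_scope.

Definition C : fieldType := complex Rdefinitions.R.

Section VF.
Variable n : nat.

Definition Poly := {mpoly C[n]}.
Definition Rat := {fraction Poly}.

Definition pfrac (p : Poly) : Rat := @FracField.tofrac Poly p.

Definition cst (a : C) : Rat := pfrac (a%:MP).
Definition xc (j : 'I_n) : Rat := pfrac 'X_j.

Definition usum : Rat := \sum_(j < n) xc j.

Definition pderiv (i : 'I_n) (f : Rat) : Rat :=
  let r := repr f in
  pfrac ((mderiv i (\n_r)) * \d_r - \n_r * (mderiv i (\d_r)))
    / pfrac ((\d_r) ^+ 2).

(* A (rational) vector field V = sum_i V i * d/dx_i. *)
Definition vfield := 'I_n -> Rat.

Definition vapply (V : vfield) (f : Rat) : Rat := \sum_(i < n) V i * pderiv i f.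

Definition lie (V W : vfield) : vfield :=
  fun i => vapply V (W i) - vapply W (V i).

(* The vector field Y^l_m = x_m u^(l-m-1) (D - u d/dx_l), where
   D = sum_j x_j d/dx_j; the exponent is an integer (possibly negative). *)
Definition Y (l m : 'I_n) : vfield :=
  fun i => xc m * usum ^ ((l : int) - (m : int) - 1)
             * (xc i - (if i == l then usum else 0)).

Definition Lspan : vfield -> Prop :=
  fun V => exists a : 'I_n -> 'I_n -> C,
    forall i, V i = \sum_(l < n) \sum_(m < n) cst (a l m) * Y l m i.

Definition Ccomb (k : nat) (b : 'I_k -> vfield) (c : 'I_k -> C) : vfield :=
  fun i => \sum_(t < k) cst (c t) * b t i.

Definition Cindep (k : nat) (b : 'I_k -> vfield) : Prop :=
  forall c : 'I_k -> C, (forall i, Ccomb b c i = 0) -> forall t, c t = 0.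

Definition Cbasis (S : vfield -> Prop) (k : nat) (b : 'I_k -> vfield) : Prop :=
  [/\ forall t, S (b t),
      Cindep b &
      forall V, S V -> exists c : 'I_k -> C, forall i, V i = Ccomb b c i].

Definition has_Cdim (S : vfield -> Prop) (d : nat) : Prop :=
  exists b : 'I_d -> vfield, Cbasis S b.

End VF.

(* [pderiv i] is computed on a representative fraction, but any representation
   gives the quotient rule, so it is a derivation of the fraction field extending
   [mderiv i].  Each [Y^l_m] has components summing to zero, hence annihilates [u]
   and all its powers, and the Leibniz rule gives
   [[Y^l_m, Y^p_q] = δ_mp Y^l_q - δ_ql Y^p_m], the relations of the matrix units
   of gl_n; so L is closed under the bracket.  The only linear relation among the
   [Y^l_m] is [Σ_l Y^l_l = 0]: multiplied by [u^n], a relation becomes polynomial,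
   and evaluating it at a coordinate vector kills every off-diagonal coefficient;
   the diagonal relation left reads [c_i u = Σ_j c_j x_j] for every [i], forcing
   all [c_i] to be equal.  Hence the [Y^l_m] other than [Y^n_n] form a basis. *)

From Pilot Require Import Defs.
From HB Require Import structures.
From mathcomp Require Import all_boot all_algebra.
From mathcomp Require Import complex Rstruct mpoly.
From mathcomp Require Import ring zify.
Set Implicit Arguments. Unset Strict Implicit. Unset Printing Implicit Defensive.
Import GRing.Theory.
Local Open Scope ring_scope.

Local Notation "x %:F" := (@FracField.tofrac _ x).

Lemma frac_mul_denom (R : idomainType) (x : {fraction R}) :
  x * (\d_(repr x))%:F = (\n_(repr x))%:F.
Proof.
rewrite -{1}[x]reprK !piE; apply/eqmodP => /=.
rewrite FracField.equivfE /FracField.mulf /=.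
by rewrite !numden_Ratio ?mulf_neq0 ?denom_ratioP ?oner_neq0 // !mulr1 mulrC.
Qed.

(* The quotient rule is independent of the representative: if [p/q = a/b]
   then [(a'b - ab')/b^2 = (p'q - pq')/q^2], with primes any derivation. *)
Lemma quotient_rule_cross (R : comPzRingType) (a b p q a' b' p' q' : R) :
  p * b = a * q -> p' * b + p * b' = a' * q + a * q' ->
  (a' * b - a * b') * q ^+ 2 = (p' * q - p * q') * b ^+ 2.
Proof.
move=> e e'; apply/eqP; rewrite -subr_eq0; apply/eqP.
transitivity ((b' * q + b * q') * (p * b - a * q)
              - (b * q) * (p' * b + p * b' - (a' * q + a * q'))); first by ring.
by rewrite e e' !subrr; ring.
Qed.

(* Stated over an abstract field: [field] does not terminate on [Rat n] itself. *)
Section QuotientRule.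
Variable K : fieldType.
Variables (a b c d a' b' c' d' : K).
Hypotheses (b0 : b != 0) (d0 : d != 0).

Lemma quotient_ruleD :
  ((a' * d + a * d' + (c' * b + c * b')) * (b * d) - (a * d + c * b) * (b' * d + b * d'))
    / (b * d) ^+ 2
  = (a' * b - a * b') / b ^+ 2 + (c' * d - c * d') / d ^+ 2.
Proof. by field; rewrite b0 d0. Qed.

Lemma quotient_ruleM :
  ((a' * c + a * c') * (b * d) - (a * c) * (b' * d + b * d')) / (b * d) ^+ 2
  = (a' * b - a * b') / b ^+ 2 * (c / d) + (a / b) * ((c' * d - c * d') / d ^+ 2).
Proof. by field; rewrite b0 d0. Qed.

End QuotientRule.

Section Derivation.
Variable n : nat.
Local Notation P := (Defs.Poly n).
Local Notation F := (Defs.Rat n).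
Local Notation pf := (@pfrac n).

HB.instance Definition _ := GRing.RMorphism.copy pf (@FracField.tofrac P).
HB.instance Definition _ := GRing.RMorphism.copy (cst n) (pf \o mpolyC n (R:=C)).

Lemma pfrac_inj : injective pf.
Proof. by move=> p q /eqP; rewrite tofrac_eq => /eqP. Qed.

Lemma pfrac_neq0 (p : P) : p != 0 -> pf p != 0.
Proof. by rewrite tofrac_eq0. Qed.

Lemma frac_repr (f : F) : exists a b : P, b != 0 /\ f = pf a / pf b.
Proof.
exists \n_(repr f), \d_(repr f); split; first exact: denom_ratioP.
by rewrite /pfrac -(frac_mul_denom f) mulfK // tofrac_eq0 denom_ratioP.
Qed.

Lemma pderiv_frac i (p q : P) : q != 0 ->
  pderiv i (pf p / pf q) =
  (pf (p^`M(i)) * pf q - pf p * pf (q^`M(i))) / pf q ^+ 2.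
Proof.
move=> q0; rewrite /pderiv.
have := frac_mul_denom (pf p / pf q); have := denom_ratioP (repr (pf p / pf q)).
set r := repr _; move: (\n_r) (\d_r) => a b b0 ab.
change (pf p / pf q * pf b = pf a) in ab.
have e : p * b = a * q.
  by apply: pfrac_inj; rewrite !rmorphM /= -[pf a]ab mulrAC divfK ?pfrac_neq0.
have e' := congr1 (mderiv i) e; rewrite !mderivM in e'.
have /(congr1 pf) := quotient_rule_cross e e'.
rewrite !(rmorphXn, rmorphM, rmorphB) /= => cross.
by apply/eqP; rewrite eqr_div ?expf_neq0 ?pfrac_neq0 // cross.
Qed.

Lemma pderiv_pfrac i (p : P) : pderiv i (pf p) = pf (p^`M(i)).
Proof.
have := pderiv_frac i p (oner_neq0 P); rewrite rmorph1 !divr1 => ->.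
by rewrite -mpolyC1 mderivC rmorph0 mulr0 subr0 mulr1 expr1n divr1.
Qed.

Lemma pderivD i (f g : F) : pderiv i (f + g) = pderiv i f + pderiv i g.
Proof.
have [a [b [b0 ->]]] := frac_repr f; have [c [d [d0 ->]]] := frac_repr g.
rewrite addf_div ?pfrac_neq0 // -!rmorphM -rmorphD !pderiv_frac ?mulf_neq0 //.
rewrite mderivD !mderivM !(rmorphXn, rmorphD, rmorphM) /=.
by rewrite quotient_ruleD ?pfrac_neq0.
Qed.

Lemma pderivM i (f g : F) : pderiv i (f * g) = pderiv i f * g + f * pderiv i g.
Proof.
have [a [b [b0 ->]]] := frac_repr f; have [c [d [d0 ->]]] := frac_repr g.
rewrite mulf_div -!rmorphM !pderiv_frac ?mulf_neq0 //.
rewrite !mderivM !(rmorphXn, rmorphD, rmorphM) /=.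
by rewrite quotient_ruleM ?pfrac_neq0.
Qed.

Lemma pderiv0 i : pderiv i (0 : F) = 0.
Proof. by rewrite -(rmorph0 pf) pderiv_pfrac raddf0 rmorph0. Qed.

HB.instance Definition _ i :=
  GRing.isNmodMorphism.Build F F (pderiv i) (pderiv0 i, pderivD i).

Lemma pderiv_cst i c : pderiv i (cst n c) = 0.
Proof. by rewrite pderiv_pfrac mderivC rmorph0. Qed.

Lemma pderiv_xc i (j : 'I_n) : pderiv i (xc j) = (j == i)%:R.
Proof.
rewrite pderiv_pfrac mderivX mnm1E; case: eqP => [->|_]; last by rewrite scale0r rmorph0.
by rewrite -{1}[U_(i)%MM]add0m addmK mpolyX0 scale1r rmorph1.
Qed.

End Derivation.

Section VectorFields.
Variable n : nat.
Local Notation F := (Defs.Rat n).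
Local Notation u := (usum n).
Local Notation w l m := (usum n ^ ((l : int) - (m : int) - 1)).
Implicit Types (V W : vfield n) (f g : F).

Lemma vapply0 V : vapply V 0 = 0.
Proof. by rewrite /vapply big1 // => i _; rewrite raddf0 mulr0. Qed.

Lemma vapplyD V f g : vapply V (f + g) = vapply V f + vapply V g.
Proof. by rewrite /vapply -big_split; apply: eq_bigr => i _; rewrite raddfD mulrDr. Qed.

HB.instance Definition _ V :=
  GRing.isNmodMorphism.Build F F (vapply V) (vapply0 V, vapplyD V).

Lemma vapplyM V f g : vapply V (f * g) = vapply V f * g + f * vapply V g.
Proof.
rewrite /vapply mulr_suml mulr_sumr -big_split; apply: eq_bigr => i _ /=.
by rewrite pderivM mulrDr mulrA; congr (_ + _); exact: mulrCA.
Qed.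

Lemma vapply_cst V c : vapply V (cst n c) = 0.
Proof. by rewrite /vapply big1 // => i _; rewrite pderiv_cst mulr0. Qed.

Lemma vapply_cstM V c f : vapply V (cst n c * f) = cst n c * vapply V f.
Proof. by rewrite vapplyM vapply_cst mul0r add0r. Qed.

Lemma vapply_xc V j : vapply V (xc j) = V j.
Proof.
rewrite /vapply (bigD1 j) //= pderiv_xc eqxx mulr1 big1 ?addr0 // => i ij.
by rewrite pderiv_xc eq_sym (negbTE ij) mulr0.
Qed.

Lemma vapply_usum V : vapply V u = \sum_j V j.
Proof. by rewrite /usum raddf_sum; apply: eq_bigr => j _ /=; rewrite vapply_xc. Qed.

Lemma vapply_expz V f (k : int) : vapply V f = 0 -> f != 0 -> vapply V (f ^ k) = 0.
Proof.
move=> Vf f0; have Vfn (m : nat) : vapply V (f ^+ m) = 0.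
  elim: m => [|m IH]; first by rewrite expr0 -(rmorph1 (cst n)) vapply_cst.
  by rewrite exprS vapplyM Vf IH mul0r mulr0 addr0.
case: k => m; first exact: Vfn.
have g0 : f ^+ m.+1 != 0 by rewrite expf_neq0.
have := congr1 (vapply V) (mulfV g0).
rewrite vapplyM Vfn mul0r add0r -(rmorph1 (cst n)) vapply_cst => /eqP.
by rewrite mulf_eq0 (negbTE g0) /= => /eqP.
Qed.

Lemma vapply_comb (I : Type) (r : seq I) (c : I -> C) (W : I -> vfield n) V f :
  (forall i, V i = \sum_(k <- r) cst n (c k) * W k i) ->
  vapply V f = \sum_(k <- r) cst n (c k) * vapply (W k) f.
Proof.
move=> defV; rewrite /vapply.
under eq_bigr => i _ do rewrite defV mulr_suml.
rewrite exchange_big; apply: eq_bigr => k _.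
by rewrite mulr_sumr; apply: eq_bigr => i _; rewrite mulrA.
Qed.

Lemma usum_neq0 : (0 < n)%N -> u != 0.
Proof.
move=> n0; pose k := Ordinal n0; pose e (j : 'I_n) : C := (j == k)%:R.
rewrite /usum /xc -(rmorph_sum (@pfrac n)); apply: pfrac_neq0.
apply/eqP => /(congr1 (meval e)); rewrite rmorph_sum rmorph0 (bigD1 k) //= big1.
  by rewrite mevalXU /e eqxx addr0 => /eqP; rewrite oner_eq0.
by move=> j /negbTE jk; rewrite mevalXU /e jk.
Qed.

Lemma xc_neq0 (j : 'I_n) : xc j != 0.
Proof.
apply: pfrac_neq0; apply/eqP => /(congr1 (meval (fun=> 1 : C))).
by rewrite mevalXU rmorph0 => /eqP; rewrite oner_eq0.
Qed.

Lemma sum_Y (l m : 'I_n) : \sum_j Y l m j = 0.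
Proof. by rewrite -mulr_sumr sumrB -big_mkcond big_pred1_eq subrr mulr0. Qed.

Lemma vapply_Y V (p q i : 'I_n) : \sum_j V j = 0 ->
  vapply V (Y p q i) =
  V q * w p q * (xc i - (if i == p then u else 0))
  + xc q * w p q * V i.
Proof.
move=> V0; have n0 : (0 < n)%N by apply: leq_ltn_trans (ltn_ord i).
have Vu : vapply V u = 0 by rewrite vapply_usum.
rewrite /Y !vapplyM raddfB /= !vapply_xc vapply_expz ?usum_neq0 //.
by rewrite (fun_if (vapply V)) Vu raddf0 if_same mulr0 addr0 subr0.
Qed.

Lemma expfz_chain (K : fieldType) (x : K) (a b c : int) : x != 0 ->
  x ^ (a - b - 1) = x * x ^ (a - c - 1) * x ^ (c - b - 1).
Proof.
move=> x0; have -> : a - b - 1 = 1 + (a - c - 1) + (c - b - 1) by ring.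
by rewrite !expfzDr // expr1z.
Qed.

Lemma lie_Y (l m p q i : 'I_n) :
  lie (Y l m) (Y p q) i = (m == p)%:R * Y l q i - (q == l)%:R * Y p m i.
Proof.
have u0 : u != 0 by apply: usum_neq0; apply: leq_ltn_trans (ltn_ord i).
rewrite /lie !vapply_Y ?sum_Y // /Y.
case: (eqVneq m p) => [<-|_]; case: (eqVneq q l) => [->|_] /=.
- by rewrite [w l l](expfz_chain _ _ m u0) [w m m](expfz_chain _ _ l u0); ring.
- by rewrite [w l q](expfz_chain _ _ m u0); ring.
- by rewrite [w p m](expfz_chain _ _ l u0); ring.
- by ring.
Qed.

End VectorFields.

Section Span.
Variable n : nat.
Local Notation F := (Defs.Rat n).
Implicit Types V W : vfield n.

Lemma lie_bilinear (I J : Type) (r : seq I) (s : seq J) (a : I -> C) (b : J -> C)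
    (Vs : I -> vfield n) (Ws : J -> vfield n) V W :
  (forall i, V i = \sum_(k <- r) cst n (a k) * Vs k i) ->
  (forall i, W i = \sum_(k <- s) cst n (b k) * Ws k i) ->
  forall i, lie V W i =
    \sum_(k <- r) \sum_(k' <- s) cst n (a k) * (cst n (b k') * lie (Vs k) (Ws k') i).
Proof.
move=> defV defW i; rewrite /lie.
have -> : vapply V (W i) = \sum_(k <- r) \sum_(k' <- s)
    cst n (a k) * (cst n (b k') * vapply (Vs k) (Ws k' i)).
  rewrite (vapply_comb _ defV); apply: eq_bigr => k _.
  by rewrite defW raddf_sum mulr_sumr; apply: eq_bigr => k' _; rewrite /= vapply_cstM.
have -> : vapply W (V i) = \sum_(k <- r) \sum_(k' <- s)
    cst n (a k) * (cst n (b k') * vapply (Ws k') (Vs k i)).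
  rewrite (vapply_comb _ defW) exchange_big; apply: eq_bigr => k' _.
  by rewrite defV raddf_sum mulr_sumr; apply: eq_bigr => k _; rewrite /= vapply_cstM mulrCA.
rewrite -sumrB; apply: eq_bigr => k _; rewrite -sumrB; apply: eq_bigr => k' _.
by rewrite -!mulrBr.
Qed.

Lemma Lspan_ext V W : Lspan V -> (forall i, W i = V i) -> Lspan W.
Proof. by case=> a defV VW; exists a => i; rewrite VW defV. Qed.

Lemma Lspan0 : Lspan (fun=> 0 : F).
Proof.
exists (fun _ _ => 0) => i; symmetry.
by apply: big1 => l _; apply: big1 => m _; rewrite rmorph0 mul0r.
Qed.

Lemma LspanD V W : Lspan V -> Lspan W -> Lspan (fun i => V i + W i).
Proof.
case=> a defV [b defW]; exists (fun l m => a l m + b l m) => i.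
rewrite defV defW -big_split; apply: eq_bigr => l _.
by rewrite -big_split; apply: eq_bigr => m _; rewrite rmorphD mulrDl.
Qed.

Lemma LspanZ c V : Lspan V -> Lspan (fun i => cst n c * V i).
Proof.
case=> a defV; exists (fun l m => c * a l m) => i.
rewrite defV mulr_sumr; apply: eq_bigr => l _.
by rewrite mulr_sumr; apply: eq_bigr => m _; rewrite rmorphM mulrA.
Qed.

Lemma Lspan_sum (I : Type) (r : seq I) (Vs : I -> vfield n) :
  (forall k, Lspan (Vs k)) -> Lspan (fun i => \sum_(k <- r) Vs k i).
Proof.
move=> VsL; elim: r => [|k r IH].
  by apply: Lspan_ext Lspan0 _ => i; rewrite big_nil.
by apply: Lspan_ext (LspanD (VsL k) IH) _ => i; rewrite big_cons.
Qed.

Lemma LspanY (l m : 'I_n) : Lspan (Y l m).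
Proof.
exists (fun l' m' => ((l' == l) && (m' == m))%:R) => i.
rewrite (bigD1 l) //= [X in _ + X]big1 ?addr0 => [|l' /negbTE ->]; last first.
  by apply: big1 => m' _; rewrite rmorph0 mul0r.
rewrite (bigD1 m) //= [X in _ + X]big1 ?addr0 => [|m' /negbTE ->]; last first.
  by rewrite andbF rmorph0 mul0r.
by rewrite !eqxx rmorph1 mul1r.
Qed.

Lemma Lspan_lie V W : Lspan V -> Lspan W -> Lspan (lie V W).
Proof.
case=> a defV [b defW].
have pairV i : V i = \sum_(k : 'I_n * 'I_n) cst n (a k.1 k.2) * Y k.1 k.2 i.
  by rewrite defV pair_big.
have pairW i : W i = \sum_(k : 'I_n * 'I_n) cst n (b k.1 k.2) * Y k.1 k.2 i.
  by rewrite defW pair_big.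
apply: Lspan_ext (lie_bilinear pairV pairW).
apply: Lspan_sum => k; apply: Lspan_sum => k'; apply: LspanZ; apply: LspanZ.
apply: Lspan_ext (LspanD (LspanZ ((k.2 == k'.1)%:R) (LspanY k.1 k'.2))
                         (LspanZ (- (k'.2 == k.1)%:R) (LspanY k'.1 k.2))) _.
by move=> i; rewrite lie_Y rmorphN !rmorph_nat mulNr.
Qed.

End Span.

Section Relations.
Variable n : nat.
Local Notation P := (Defs.Poly n).
Local Notation pf := (@pfrac n).
Local Notation u := (usum n).
Local Notation U := (\sum_(j < n) 'X_j : P).

Lemma sum_cst_Ydiag (c : 'I_n -> C) (i : 'I_n) :
  \sum_l cst n (c l) * Y l l i = xc i / u * (\sum_l cst n (c l) * xc l - cst n (c i) * u).
Proof.
have Yll l : Y l l i = xc l / u * xc i - (i == l)%:R * (xc l / u * u).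
  by rewrite /Y subrr sub0r exprN1; case: (i == l) => /=; ring.
under eq_bigr => l _ do rewrite Yll mulrBr.
rewrite sumrB [X in _ - X](bigD1 i) //= [X in _ - (_ + X)]big1 => [|l /negbTE li]; last first.
  by rewrite eq_sym li mul0r mulr0.
rewrite mulrBr eqxx mul1r addr0; congr (_ - _); last by ring.
by rewrite mulr_sumr; apply: eq_bigr => l _; ring.
Qed.

Lemma sum_Ydiag (i : 'I_n) : \sum_l Y l l i = 0.
Proof.
transitivity (\sum_l cst n 1 * Y l l i); first by apply: eq_bigr => l _; rewrite rmorph1 mul1r.
rewrite sum_cst_Ydiag rmorph1 mul1r (eq_bigr (@xc n)) => [|l _]; last by rewrite mul1r.
by rewrite subrr mulr0.
Qed.

(* [Y^l_m i] with the denominator [u^n] cleared: the exponent [l - m - 1 + n]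
   is nonnegative because [m < n]. *)
Definition Ynum (l m i : 'I_n) : P :=
  'X_m * U ^+ (l + n - m.+1) * ('X_i - (if i == l then U else 0)).

Lemma pfrac_U : pf U = u.
Proof. exact: rmorph_sum. Qed.

Lemma Y_clear (l m i : 'I_n) : Y l m i * u ^+ n = pf (Ynum l m i).
Proof.
have u0 : u != 0 by apply: usum_neq0; apply: leq_ltn_trans (ltn_ord i).
rewrite /Ynum !(rmorphXn, rmorphM, rmorphB) /= (fun_if pf) rmorph0 pfrac_U /Y.
rewrite mulrAC; congr (_ * _); rewrite -mulrA; congr (_ * _).
by rewrite !exprnP -expfzDr //; congr (_ ^ _); have := ltn_ord m; lia.
Qed.

Section Coefficients.
Variable d : 'I_n -> 'I_n -> C.
Hypothesis d_rel : forall i, \sum_l \sum_m cst n (d l m) * Y l m i = 0.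

Lemma Y_relation_offdiag (i k : 'I_n) : i != k -> d i k = 0.
Proof.
move=> ik; pose e (j : 'I_n) : C := (j == k)%:R.
have eU : meval e U = 1.
  rewrite rmorph_sum (bigD1 k) //= big1 ?mevalXU /e ?eqxx ?addr0 // => j /negbTE jk.
  by rewrite mevalXU jk.
have eY l m :
    meval e ((d l m)%:MP * Ynum l m i) = - (d l m * ((m == k) && (i == l))%:R).
  rewrite /Ynum !(rmorphXn, rmorphM, rmorphB) /= (fun_if (meval e)) !mevalXU mevalC eU /e.
  by rewrite (negbTE ik) expr1n; case: (m == k); case: (i == l); rewrite /= ?subrr; ring.
have : \sum_l \sum_m (d l m)%:MP * Ynum l m i = 0.
  apply: pfrac_inj; rewrite rmorph0 -(mul0r (u ^+ n)) -(d_rel i) mulr_suml rmorph_sum.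
  apply: eq_bigr => l _; rewrite mulr_suml rmorph_sum; apply: eq_bigr => m _.
  by rewrite rmorphM /= -Y_clear mulrA.
move/(congr1 (meval e)); rewrite rmorph0 rmorph_sum (bigD1 i) //=.
rewrite [X in _ + X]big1 => [|l li]; last first.
  rewrite rmorph_sum big1 // => m _ /=.
  by rewrite eY [i == l]eq_sym (negbTE li) andbF mulr0 oppr0.
rewrite addr0 rmorph_sum (bigD1 k) //= [X in _ + X]big1 => [|m mk]; last first.
  by rewrite /= eY (negbTE mk) mulr0 oppr0.
by rewrite /= eY !eqxx /= addr0 mulr1 => /eqP; rewrite oppr_eq0 => /eqP.
Qed.

Lemma Y_relation_diag (l m : 'I_n) : d l l = d m m.
Proof.
have n0 : (0 < n)%N := leq_ltn_trans (leq0n _) (ltn_ord l).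
have diag i : cst n (d i i) * u = \sum_j cst n (d j j) * xc j.
  have : \sum_j cst n (d j j) * Y j j i = 0.
    rewrite -[RHS](d_rel i); apply: eq_bigr => j _.
    rewrite (bigD1 j) //= big1 ?addr0 // => k kj.
    have jk : j != k by rewrite eq_sym.
    by rewrite Y_relation_offdiag // rmorph0 mul0r.
  have xu0 : xc i / u != 0 by rewrite mulf_neq0 ?invr_neq0 ?xc_neq0 ?usum_neq0.
  by rewrite sum_cst_Ydiag => /eqP; rewrite mulf_eq0 (negbTE xu0) subr_eq0 => /eqP.
apply: (fmorph_inj (cst n)); apply: (mulIf (usum_neq0 n0)).
by rewrite !diag.
Qed.

End Coefficients.
End Relations.

Lemma sum_nat_divmod (R : nmodType) (p j : nat) (G : nat -> nat -> R) : (0 < p)%N ->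
  \sum_(0 <= t < j * p) G (t %/ p)%N (t %% p)%N = \sum_(0 <= l < j) \sum_(0 <= m < p) G l m.
Proof.
move=> p0; elim: j => [|j IH]; first by rewrite mul0n !big_geq.
rewrite (big_cat_nat _ (n := (j * p)%N)) ?leq_mul2r ?leqnSn ?orbT //= IH.
rewrite big_nat_recr //=; congr (_ + _).
rewrite -{1}[(j * p)%N]add0n big_addn mulSn addnK.
apply: eq_big_nat => t /andP [_ tp].
by rewrite addnC divnMDl // divn_small // addn0 modnMDl modn_small.
Qed.

Section Dimension.
Variable k : nat.
Local Notation n := k.+1.
Local Notation N := (n ^ 2 - 1)%N.
Local Notation L := (@ord_max k).

Lemma card_basis_succ : N.+1 = (n * n)%N.
Proof. by rewrite -mulnn; have := muln_gt0 n n; lia. Qed.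

(* The [Y^l_m] other than [Y^L_L], enumerated row by row. *)
Definition Ybasis (t : 'I_N) : vfield n := Y (inord (t %/ n)) (inord (t %% n)).

(* Extension by zero of a coefficient family on ['I_N]; index [N] is [(L, L)]. *)
Definition coef_ext (c : 'I_N -> C) (t : nat) : C := if insub t is Some s then c s else 0.

Lemma coef_ext_last (c : 'I_N -> C) : coef_ext c (L * n + L)%N = 0.
Proof.
rewrite /coef_ext insubF //; apply/negbTE; rewrite -leqNgt /=.
by have := card_basis_succ; nia.
Qed.

Lemma Ccomb_Ybasis c i :
  Ccomb Ybasis c i = \sum_(l < n) \sum_(m < n) cst n (coef_ext c (l * n + m)) * Y l m i.
Proof.
pose G l m := cst n (coef_ext c (l * n + m)) * Y (inord l) (inord m) i.
transitivity (\sum_(0 <= t < N) G (t %/ n)%N (t %% n)%N).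
  by rewrite big_mkord; apply: eq_bigr => t _; rewrite /G -divn_eq /coef_ext valK.
transitivity (\sum_(0 <= t < n * n) G (t %/ n)%N (t %% n)%N).
  rewrite -card_basis_succ big_nat_recr //= /G -divn_eq /coef_ext insubF ?ltnn //.
  by rewrite rmorph0 mul0r addr0.
rewrite sum_nat_divmod // big_mkord; apply: eq_bigr => l _.
by rewrite big_mkord; apply: eq_bigr => m _; rewrite /G !inord_val.
Qed.

Lemma Ybasis_indep : Cindep Ybasis.
Proof.
move=> c c0 t.
have rel i : \sum_(l < n) \sum_(m < n) cst n (coef_ext c (l * n + m)) * Y l m i = 0.
  by rewrite -Ccomb_Ybasis c0.
have coef0 (l m : 'I_n) : coef_ext c (l * n + m) = 0.
  case: (eqVneq l m) => [<-|lm]; last exact: Y_relation_offdiag rel _ _ lm.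
  by rewrite (Y_relation_diag rel l L) coef_ext_last.
have tnn : (t < n * n)%N by rewrite -card_basis_succ ltnS ltnW.
have := coef0 (inord (t %/ n)) (inord (t %% n)).
by rewrite !inordK ?ltn_pmod ?ltn_divLR // -divn_eq /coef_ext valK.
Qed.

Lemma Ybasis_span V : Lspan V -> exists c : 'I_N -> C, forall i, V i = Ccomb Ybasis c i.
Proof.
case=> a defV.
pose c (t : 'I_N) :=
  a (inord (t %/ n)) (inord (t %% n)) - ((t %/ n)%N == (t %% n)%N)%:R * a L L.
exists c => i; rewrite Ccomb_Ybasis defV.
have ext_c (l m : 'I_n) : coef_ext c (l * n + m) = a l m - (l == m)%:R * a L L.
  rewrite /coef_ext; case: insubP => [s _ sE|]; last first.
    rewrite -leqNgt => lmN; have NS := card_basis_succ.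
    have [lL mL] : l = L /\ m = L.
      by split; apply: val_inj => /=; have := ltn_ord l; have := ltn_ord m; nia.
    by rewrite lL mL eqxx mul1r subrr.
  rewrite /c sE divnMDl // divn_small // addn0 modnMDl modn_small // !inord_val.
  by congr (_ - _ * _); rewrite -val_eqE.
have diag_part (l : 'I_n) :
    \sum_m cst n ((l == m)%:R * a L L) * Y l m i = cst n (a L L) * Y l l i.
  rewrite (bigD1 l) //= eqxx mul1r big1 ?addr0 // => m /negbTE ml.
  by rewrite eq_sym ml mul0r rmorph0 mul0r.
under [RHS]eq_bigr => l _ do under eq_bigr => m _ do rewrite ext_c rmorphB mulrBl.
under [RHS]eq_bigr => l _ do rewrite sumrB diag_part.
by rewrite sumrB -mulr_sumr sum_Ydiag mulr0 subr0.
Qed.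

End Dimension.

Theorem theorem2 (n : nat) (hn : (2 <= n)%N) :
  (forall V W : vfield n, Lspan V -> Lspan W -> Lspan (lie V W)) /\
  has_Cdim (@Lspan n) (n ^ 2 - 1).
Proof.
case: n hn => [//|k] _; split; first exact: Lspan_lie.
exists (@Ybasis k); split; first by move=> t; apply: LspanY.
- exact: Ybasis_indep.
- exact: Ybasis_span.
Qed.
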